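(* Let $\mathbf U$ be a real $3\times3$ positive-definite symmetric matrix, $|\hat{\mathbf e}|=1$, $\hat{\mathbf U}=(-\mathbf I+2\hat{\mathbf e}\otimes\hat{\mathbf e})\mathbf U(-\mathbf I+2\hat{\mathbf e}\otimes\hat{\mathbf e})$, and let $\hat{\mathbf R}\in\mathrm{SO}(3)$, nonzero $\mathbf a,\mathbf n\in\mathbb R^3$ satisfy $\hat{\mathbf R}\hat{\mathbf U}=\mathbf U+\mathbf a\otimes\mathbf n$. Consider the conditions (CC1) the middle eigenvalue $\lambda_2$ of $\mathbf U$ equals $1$; (CC2) $\mathbf a\cdot\mathbf U\,\mathrm{cof}(\mathbf U^2-\mathbf I)\mathbf n=0$; (CC2') $(\mathbf a\cdot\hat{\mathbf v}_2)(\mathbf n\cdot\hat{\mathbf v}_2)=0$, where $\hat{\mathbf v}_2$ is a normalized eigenvector of $\mathbf U$ corresponding to its middle eigenvalue; (CC3) $\mathrm{tr}\,\mathbf U^2-\det\mathbf U^2-\frac{|\mathbf a|^2|\mathbf n|^2}{4}-2\ge0$. Then (CC1), (CC2), (CC3) hold if and only if (CC1), (CC2'), (CC3) hold.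
   Context: $\mathbf a\otimes\mathbf n$ is the matrix $\mathbf x\mapsto(\mathbf n\cdot\mathbf x)\mathbf a$; $\mathrm{cof}\,\mathbf A$ is the cofactor matrix, $(\mathrm{cof}\,\mathbf A)_{ij}=(-1)^{i+j}\det$ of the submatrix obtained by deleting row $i$ and column $j$. *)

From HB Require Import structures.
From mathcomp Require Import all_boot all_order all_algebra.
From mathcomp Require Import reals.
Set Implicit Arguments. Unset Strict Implicit. Unset Printing Implicit Defensive.
Import Order.TTheory GRing.Theory Num.Theory.
Local Open Scope ring_scope.

Section Defs.
Variable R : realType.

Definition dotv (u v : 'cV[R]_3) : R := (u^T *m v) 0 0.

Definition tens (a n : 'cV[R]_3) : 'M[R]_3 := a *m n^T.

Definition cofm (A : 'M[R]_3) : 'M[R]_3 := \matrix_(i, j) cofactor A i j.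

Definition sym_posdef (U : 'M[R]_3) : Prop :=
  U^T = U /\ forall x : 'cV[R]_3, x != 0 -> 0 < dotv x (U *m x).

Definition SO3 (Q : 'M[R]_3) : Prop := Q^T *m Q = 1 /\ \det Q = 1.

(* l is the middle eigenvalue of U: the median of the roots of the
   characteristic polynomial, counted with multiplicity *)
Definition middle_eigenvalue (U : 'M[R]_3) (l : R) : Prop :=
  exists l1 l3 : R, l1 <= l <= l3 /\
    char_poly U = ('X - l1%:P) * ('X - l%:P) * ('X - l3%:P).

Definition CC1 (U : 'M[R]_3) : Prop := middle_eigenvalue U 1.

Definition CC2 (U : 'M[R]_3) (a n : 'cV[R]_3) : Prop :=
  dotv a (U *m cofm (U *m U - 1) *m n) = 0.

Definition CC2' (U : 'M[R]_3) (a n : 'cV[R]_3) : Prop :=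
  exists (l2 : R) (v2 : 'cV[R]_3),
    middle_eigenvalue U l2 /\ dotv v2 v2 = 1 /\ U *m v2 = l2 *: v2 /\
    dotv a v2 * dotv n v2 = 0.

Definition CC3 (U : 'M[R]_3) (a n : 'cV[R]_3) : Prop :=
  0 <= \tr (U *m U) - \det (U *m U) - dotv a a * dotv n n / 4%:R - 2%:R.

End Defs.

(* Under (CC1) let λ1 ≤ 1 ≤ λ3 be the eigenvalues of U. Then
   tr U^2 - det U^2 - 2 = -(λ1^2 - 1)(λ3^2 - 1), so (CC3) with a, n ≠ 0 forces
   λ1 < 1 < λ3. Hence M := U^2 - I is symmetric with kernel spanned by the unit
   eigenvector v2 of U for the eigenvalue 1. The rows of cof M are cross products
   of rows of M, which are orthogonal to v2, so cof M = σ2(M) v2 ⊗ v2 with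
   σ2(M) = tr (adj M) = (λ1^2 - 1)(λ3^2 - 1) ≠ 0. As U v2 = v2, (CC2) reads
   σ2(M) (a·v2)(n·v2) = 0, which is (CC2'). *)
From HB Require Import structures.
From mathcomp Require Import all_boot all_order all_algebra.
From mathcomp Require Import reals ring lra.
Import Order.TTheory GRing.Theory Num.Theory.
Local Open Scope ring_scope.

Set Implicit Arguments.
Unset Strict Implicit.

Section Coordinates3.
Variable R : comNzRingType.

Lemma ord3P (i : 'I_3) : i = 0 \/ i = 1 \/ i = 2.
Proof. by case: i => [[|[|[|//]]] ?]; [left | right; left | right; right]; apply: val_inj. Qed.

Lemma sum_ord3 (f : 'I_3 -> R) : \sum_(i < 3) f i = f 0 + f 1 + f 2.
Proof. by rewrite !big_ord_recr big_ord0 /= add0r; congr (_ + _ + _); congr f; apply: val_inj. Qed.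

Lemma mulmx3E m n (A : 'M[R]_(m, 3)) (B : 'M[R]_(3, n)) i j :
  (A *m B) i j = A i 0 * B 0 j + A i 1 * B 1 j + A i 2 * B 2 j.
Proof. by rewrite mxE sum_ord3. Qed.

Lemma mxtrace3 (A : 'M[R]_3) : \tr A = A 0 0 + A 1 1 + A 2 2.
Proof. exact: sum_ord3. Qed.

Lemma det_mx22 (A : 'M[R]_2) : \det A = A 0 0 * A 1 1 - A 0 1 * A 1 0.
Proof.
have sum2 (f : 'I_2 -> R) : \sum_(i < 2) f i = f 0 + f 1.
  by rewrite !big_ord_recr big_ord0 /= add0r; congr (_ + _); congr f; apply: val_inj.
rewrite (expand_det_row _ 0) sum2 /cofactor !det_mx11 !mxE /=.
have -> : lift 0 (0 : 'I_1) = 1 :> 'I_2 by apply: val_inj.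
have -> : lift 1 (0 : 'I_1) = 0 :> 'I_2 by apply: val_inj.
rewrite expr0 expr1; ring.
Qed.

Fact lift_ord3 :
  (lift (0 : 'I_3) (0 : 'I_2) = 1) * (lift (0 : 'I_3) (1 : 'I_2) = 2) *
  (lift (1 : 'I_3) (0 : 'I_2) = 0) * (lift (1 : 'I_3) (1 : 'I_2) = 2) *
  (lift (2 : 'I_3) (0 : 'I_2) = 0) * (lift (2 : 'I_3) (1 : 'I_2) = 1).
Proof. by do !split; apply: val_inj. Qed.

Ltac cofactor3_tac := rewrite /cofactor det_mx22 !mxE !lift_ord3 /=; ring.

(* Stated in the cyclic form A_(i+1)(j+1) A_(i+2)(j+2) - A_(i+1)(j+2) A_(i+2)(j+1),
   which is how cross_parallel_unit produces them. *)
Lemma cofactor3_00 (A : 'M[R]_3) : cofactor A 0 0 = A 1 1 * A 2 2 - A 1 2 * A 2 1.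
Proof. cofactor3_tac. Qed.
Lemma cofactor3_01 (A : 'M[R]_3) : cofactor A 0 1 = A 1 2 * A 2 0 - A 1 0 * A 2 2.
Proof. cofactor3_tac. Qed.
Lemma cofactor3_02 (A : 'M[R]_3) : cofactor A 0 2 = A 1 0 * A 2 1 - A 1 1 * A 2 0.
Proof. cofactor3_tac. Qed.
Lemma cofactor3_10 (A : 'M[R]_3) : cofactor A 1 0 = A 2 1 * A 0 2 - A 2 2 * A 0 1.
Proof. cofactor3_tac. Qed.
Lemma cofactor3_11 (A : 'M[R]_3) : cofactor A 1 1 = A 2 2 * A 0 0 - A 2 0 * A 0 2.
Proof. cofactor3_tac. Qed.
Lemma cofactor3_12 (A : 'M[R]_3) : cofactor A 1 2 = A 2 0 * A 0 1 - A 2 1 * A 0 0.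
Proof. cofactor3_tac. Qed.
Lemma cofactor3_20 (A : 'M[R]_3) : cofactor A 2 0 = A 0 1 * A 1 2 - A 0 2 * A 1 1.
Proof. cofactor3_tac. Qed.
Lemma cofactor3_21 (A : 'M[R]_3) : cofactor A 2 1 = A 0 2 * A 1 0 - A 0 0 * A 1 2.
Proof. cofactor3_tac. Qed.
Lemma cofactor3_22 (A : 'M[R]_3) : cofactor A 2 2 = A 0 0 * A 1 1 - A 0 1 * A 1 0.
Proof. cofactor3_tac. Qed.

Definition cofactor3E :=
  (cofactor3_00, cofactor3_01, cofactor3_02, cofactor3_10, cofactor3_11,
   cofactor3_12, cofactor3_20, cofactor3_21, cofactor3_22).

Lemma det_mx33 (A : 'M[R]_3) :
  \det A = A 0 0 * (A 1 1 * A 2 2 - A 1 2 * A 2 1)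
         + A 0 1 * (A 1 2 * A 2 0 - A 1 0 * A 2 2)
         + A 0 2 * (A 1 0 * A 2 1 - A 1 1 * A 2 0).
Proof. by rewrite (expand_det_row _ 0) sum_ord3 !cofactor3E. Qed.

Lemma mxtrace_adj3 (A : 'M[R]_3) :
  \tr (\adj A) = cofactor A 0 0 + cofactor A 1 1 + cofactor A 2 2.
Proof. by rewrite mxtrace3 !mxE. Qed.

Lemma horner_char_poly n (A : 'M[R]_n) x : (char_poly A).[x] = \det (x%:M - A).
Proof.
rewrite /char_poly -horner_evalE -det_map_mx; congr (\det _).
apply/matrixP => i j; rewrite !mxE /horner_eval /=.
by rewrite horner_evalE hornerD hornerN hornerMn hornerX hornerC.
Qed.

Lemma horner_char_poly3 (A : 'M[R]_3) x :
  (char_poly A).[x] = x ^+ 3 - \tr A * x ^+ 2 + \tr (\adj A) * x - \det A.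
Proof. by rewrite horner_char_poly mxtrace_adj3 !det_mx33 mxtrace3 !cofactor3E !mxE /=; ring. Qed.

Lemma mxtrace_sqr3 (A : 'M[R]_3) :
  \tr (A *m A) = \tr A ^+ 2 - 2%:R * \tr (\adj A).
Proof. by rewrite mxtrace_adj3 !mxtrace3 !mulmx3E !cofactor3E; ring. Qed.

Lemma mxtrace_adj_sqr_sub1 (A : 'M[R]_3) :
  \tr (\adj (A *m A - 1)) = \tr (\adj A) ^+ 2 - 2%:R * \tr A * \det A
    - 2%:R * \tr A ^+ 2 + 4%:R * \tr (\adj A) + 3%:R.
Proof.
by rewrite !mxtrace_adj3 !cofactor3E det_mx33 mxtrace3 !mxE /= !sum_ord3; ring.
Qed.

Lemma sym_rank1_mx n (C : 'M[R]_n) (k v : 'cV[R]_n) :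
  C^T = C -> C = k *m v^T -> v^T *m v = 1 -> C = \tr C *: (v *m v^T).
Proof.
move=> Csym Ckv vv.
have kE : k = C *m v by rewrite Ckv -mulmxA vv mulmx1.
set c := (k^T *m v) 0 0.
have Cv : C *m v = c *: v.
  by rewrite -{1}Csym Ckv trmx_mul trmxK -mulmxA [k^T *m v]mx11_scalar mul_mx_scalar.
have CE : C = c *: (v *m v^T) by rewrite {1}Ckv kE Cv scalemxAl.
by rewrite {2}CE mxtraceZ mxtrace_mulC vv mxtrace1 mulr1.
Qed.

End Coordinates3.

Section Real3.
Variable R : realType.
Implicit Types (U M : 'M[R]_3) (a n v w : 'cV[R]_3).

Lemma dotvE u w : dotv u w = u 0 0 * w 0 0 + u 1 0 * w 1 0 + u 2 0 * w 2 0.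
Proof. by rewrite /dotv mulmx3E !mxE. Qed.

Lemma dotv_gt0 w : w != 0 -> 0 < dotv w w.
Proof.
move=> w_neq0; rewrite dotvE lt_def; apply/andP; split; last by nra.
apply: contra w_neq0 => /eqP sum_sqr0; apply/eqP/matrixP => i j.
rewrite ord1 mxE; have w0 : w i 0 ^+ 2 = 0 by case: (ord3P i) => [->|[->|->]]; nra.
by apply/eqP; rewrite -sqrf_eq0 w0.
Qed.

Lemma cross_parallel_unit (p0 p1 p2 q0 q1 q2 v0 v1 v2 : R) :
  p0 * v0 + p1 * v1 + p2 * v2 = 0 -> q0 * v0 + q1 * v1 + q2 * v2 = 0 ->
  v0 * v0 + v1 * v1 + v2 * v2 = 1 ->
  let K := (p1 * q2 - p2 * q1) * v0 + (p2 * q0 - p0 * q2) * v1 + (p0 * q1 - p1 * q0) * v2 in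
  [/\ p1 * q2 - p2 * q1 = K * v0, p2 * q0 - p0 * q2 = K * v1 & p0 * q1 - p1 * q0 = K * v2].
Proof.
move=> pv qv vv K.
(* v × (p × q) = p (v·q) - q (v·p) = 0, so p × q = (v·(p × q)) v since |v| = 1. *)
split; apply/eqP; rewrite -subr_eq0; apply/eqP.
- transitivity ((p1 * q2 - p2 * q1) * (1 - (v0 * v0 + v1 * v1 + v2 * v2))
    - v1 * (p2 * (q0 * v0 + q1 * v1 + q2 * v2) - q2 * (p0 * v0 + p1 * v1 + p2 * v2))
    + v2 * (p1 * (q0 * v0 + q1 * v1 + q2 * v2) - q1 * (p0 * v0 + p1 * v1 + p2 * v2))).
    by rewrite /K; ring.
  by rewrite pv qv vv; ring.
- transitivity ((p2 * q0 - p0 * q2) * (1 - (v0 * v0 + v1 * v1 + v2 * v2))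
    - v2 * (p0 * (q0 * v0 + q1 * v1 + q2 * v2) - q0 * (p0 * v0 + p1 * v1 + p2 * v2))
    + v0 * (p2 * (q0 * v0 + q1 * v1 + q2 * v2) - q2 * (p0 * v0 + p1 * v1 + p2 * v2))).
    by rewrite /K; ring.
  by rewrite pv qv vv; ring.
- transitivity ((p0 * q1 - p1 * q0) * (1 - (v0 * v0 + v1 * v1 + v2 * v2))
    - v0 * (p1 * (q0 * v0 + q1 * v1 + q2 * v2) - q1 * (p0 * v0 + p1 * v1 + p2 * v2))
    + v1 * (p0 * (q0 * v0 + q1 * v1 + q2 * v2) - q0 * (p0 * v0 + p1 * v1 + p2 * v2))).
    by rewrite /K; ring.
  by rewrite pv qv vv; ring.
Qed.

Lemma cofmE M : cofm M = (\adj M)^T.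
Proof. by apply/matrixP => i j; rewrite !mxE. Qed.

(* Row i of cof M is the cross product of rows i+1 and i+2 of M. *)
Lemma cofm_kernel_unit M v :
  M *m v = 0 -> dotv v v = 1 -> cofm M = (cofm M *m v) *m v^T.
Proof.
move=> Mv0 vv; rewrite dotvE in vv.
have ker i : M i 0 * v 0 0 + M i 1 * v 1 0 + M i 2 * v 2 0 = 0.
  by rewrite -mulmx3E Mv0 mxE.
have [c00 c01 c02] := cross_parallel_unit (ker 1) (ker 2) vv.
have [c10 c11 c12] := cross_parallel_unit (ker 2) (ker 0) vv.
have [c20 c21 c22] := cross_parallel_unit (ker 0) (ker 1) vv.
apply/matrixP => i j; rewrite !mxE big_ord1 mulmx3E !mxE.
by case: (ord3P i) => [->|[->|->]]; case: (ord3P j) => [->|[->|->]];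
  rewrite !cofactor3E.
Qed.

Lemma cofm_sym_kernel_unit M v : M^T = M -> M *m v = 0 -> dotv v v = 1 ->
  cofm M = \tr (\adj M) *: (v *m v^T).
Proof.
move=> Msym Mv0 vv.
have cofm_sym : (cofm M)^T = cofm M by rewrite cofmE trmxK trmx_adj Msym.
rewrite -mxtrace_tr -cofmE; apply: sym_rank1_mx cofm_sym (cofm_kernel_unit Mv0 vv) _.
by rewrite [LHS]mx11_scalar -[_ 0 0]/(dotv v v) vv.
Qed.

Lemma dotv_rank1 a n v c :
  dotv a ((c *: (v *m v^T)) *m n) = c * (dotv a v * dotv n v).
Proof. by rewrite !dotvE !mulmx3E !mxE !big_ord1 !mxE; ring. Qed.

Lemma char_poly3_vieta U l1 l2 l3 :
  char_poly U = ('X - l1%:P) * ('X - l2%:P) * ('X - l3%:P) ->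
  [/\ \tr U = l1 + l2 + l3, \tr (\adj U) = l1 * l2 + l1 * l3 + l2 * l3
    & \det U = l1 * l2 * l3].
Proof.
move=> charU.
have at_x x : x ^+ 3 - \tr U * x ^+ 2 + \tr (\adj U) * x - \det U
              = (x - l1) * (x - l2) * (x - l3).
  by rewrite -horner_char_poly3 charU !hornerE.
have := at_x 0; have := at_x 1; have := at_x (-1).
by rewrite !exprS !expr0 => *; split; lra.
Qed.

Lemma CC1_CC3_spectrum U a n : a != 0 -> n != 0 -> CC1 U -> CC3 U a n ->
  exists l1 l3, [/\ l1 < 1 < l3,
    char_poly U = ('X - l1%:P) * ('X - 1%:P) * ('X - l3%:P)
    & \tr (\adj (U *m U - 1)) != 0].
Proof.
move=> a_neq0 n_neq0 [l1 [l3 [/andP[l1_le1 l3_ge1] charU]]] cc3.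
have [trU sig2U detU] := char_poly3_vieta charU.
have sig2M : \tr (\adj (U *m U - 1)) = (l1 ^+ 2 - 1) * (l3 ^+ 2 - 1).
  by rewrite mxtrace_adj_sqr_sub1 trU sig2U detU; ring.
have an_gt0 : 0 < dotv a a * dotv n n / 4%:R.
  by rewrite divr_gt0 ?mulr_gt0 ?dotv_gt0.
have sig2M_lt0 : (l1 ^+ 2 - 1) * (l3 ^+ 2 - 1) < 0.
  move: cc3 an_gt0; rewrite /CC3 mxtrace_sqr3 det_mulmx trU sig2U detU.
  move: (dotv a a * dotv n n / 4%:R) => q cc3 q_gt0; lra.
exists l1, l3; split => //; last by rewrite sig2M lt_eqF.
rewrite !lt_neqAle l1_le1 l3_ge1 !andbT; apply/andP.
by split; apply: contraTneq sig2M_lt0 => l_eq1; subst;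
  rewrite expr1n subrr ?mul0r ?mulr0 ltxx.
Qed.

Lemma prod3_subr_eq0 (x y z w : R) :
  (w - x) * (w - y) * (w - z) = 0 -> [\/ w = x, w = y | w = z].
Proof.
move/eqP; rewrite !mulf_eq0 !subr_eq0 => /orP[/orP[]|] /eqP w_eq.
- exact: Or31.
- exact: Or32.
- exact: Or33.
Qed.

Lemma middle_eigenvalue_uniq U (l1 l l3 m : R) : l1 < l < l3 ->
  char_poly U = ('X - l1%:P) * ('X - l%:P) * ('X - l3%:P) ->
  middle_eigenvalue U m -> m = l.
Proof.
move=> /andP[l1_lt_l l_lt_l3] charU [m1 [m3 [/andP[m1_le_m m_le_m3] charU']]].
have roots x : (x - l1) * (x - l) * (x - l3) = (x - m1) * (x - m) * (x - m3).
  by move: (erefl (char_poly U).[x]); rewrite {1}charU charU' !hornerE.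
have root_of x : (x - l1) * (x - l) * (x - l3) = 0 -> [\/ x = m1, x = m | x = m3].
  by rewrite roots => /prod3_subr_eq0.
have m_root : [\/ m = l1, m = l | m = l3].
  by apply: prod3_subr_eq0; rewrite roots subrr mulr0 mul0r.
have l1_root : [\/ l1 = m1, l1 = m | l1 = m3] by apply: root_of; rewrite subrr !mul0r.
have l_root : [\/ l = m1, l = m | l = m3] by apply: root_of; rewrite subrr mulr0 mul0r.
have l3_root : [\/ l3 = m1, l3 = m | l3 = m3] by apply: root_of; rewrite subrr mulr0.
case: m_root => [m_eq | // | m_eq].
  by case: l_root => ?; case: l3_root => ?; lra.
by case: l_root => ?; case: l1_root => ?; lra.
Qed.

Lemma exists_unit_eigenvector U (l : R) : U^T = U -> root (char_poly U) l ->
  exists v, dotv v v = 1 /\ U *m v = l *: v.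
Proof.
move=> Usym; rewrite -eigenvalue_root_char => /eigenvalueP[w wU w_neq0].
have Uw : U *m w^T = l *: w^T by rewrite -{1}Usym -trmx_mul wU linearZ.
have ww_gt0 : 0 < dotv w^T w^T by rewrite dotv_gt0 ?trmx_eq0.
pose r := Num.sqrt (dotv w^T w^T).
have r_neq0 : r != 0 by rewrite sqrtr_eq0 -ltNge.
exists (r^-1 *: w^T); split; last by rewrite -scalemxAr Uw !scalerA mulrC.
transitivity (r^-1 ^+ 2 * dotv w^T w^T); first by rewrite !dotvE !mxE; ring.
by rewrite exprVn sqr_sqrtr ?ltW // mulVf ?gt_eqF.
Qed.

Lemma CC2_unit_eigenvectorE U a n v : U^T = U -> dotv v v = 1 -> U *m v = v ->
  dotv a (U *m cofm (U *m U - 1) *m n)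
    = \tr (\adj (U *m U - 1)) * (dotv a v * dotv n v).
Proof.
move=> Usym vv Uv.
have Msym : (U *m U - 1)^T = U *m U - 1 by rewrite linearB /= trmx_mul Usym trmx1.
have Mv0 : (U *m U - 1) *m v = 0 by rewrite mulmxBl mul1mx -mulmxA !Uv subrr.
by rewrite (cofm_sym_kernel_unit Msym Mv0 vv) -scalemxAr mulmxA Uv dotv_rank1.
Qed.

End Real3.

Unset Implicit Arguments.

Theorem corollary3 (R : realType) (U Rh : 'M[R]_3) (e a n : 'cV[R]_3) :
  sym_posdef U ->
  dotv e e = 1 ->
  SO3 Rh ->
  a != 0 -> n != 0 ->
  Rh *m ((- 1 + 2%:R *: tens e e) *m U *m (- 1 + 2%:R *: tens e e))
    = U + tens a n ->
  (CC1 U /\ CC2 U a n /\ CC3 U a n) <-> (CC1 U /\ CC2' U a n /\ CC3 U a n).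
Proof.
move=> [Usym _] _ _ a_neq0 n_neq0 _.
split=> -[cc1 [cc2 cc3]]; split=> //; split=> //;
  have [l1 [l3 [l13 charU sig2_neq0]]] := CC1_CC3_spectrum a_neq0 n_neq0 cc1 cc3.
- have [v [vv Uv]] : exists v, dotv v v = 1 /\ U *m v = 1 *: v.
    by apply: exists_unit_eigenvector; rewrite // charU !rootM !root_XsubC eqxx orbT.
  rewrite scale1r in Uv; exists 1, v; do 3!split=> //; first by rewrite scale1r.
  move: cc2; rewrite /CC2 (CC2_unit_eigenvectorE _ _ Usym vv Uv).
  by move/eqP; rewrite mulf_eq0 (negbTE sig2_neq0) => /eqP.
- case: cc2 => l2 [v [mid [vv [Uv av_nv]]]].
  rewrite (middle_eigenvalue_uniq l13 charU mid) scale1r in Uv.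
  by rewrite /CC2 (CC2_unit_eigenvectorE _ _ Usym vv Uv) av_nv mulr0.
Qed.
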